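(* Let $m\ge n$ be positive integers of the same parity, and define \[ h(z)=\frac{1}{\sqrt2}\Bigl\{\bigl(\sqrt{z^2+1}+1\bigr)^{\frac{m+n}{2}}\bigl(\sqrt{z^2+1}+z\bigr)^{\frac{m-n}{2}}+(-1)^n\bigl(\sqrt{z^2+1}-1\bigr)^{\frac{m+n}{2}}\bigl(\sqrt{z^2+1}-z\bigr)^{\frac{m-n}{2}}\Bigr\}, \] which is a polynomial in $z$ (with the branch $\sqrt{z^2+1}=1$ at $z=0$). Let $\rho(t)=T_n(1-2t)+T_m(1+2t)$, whose degree is $m$ if $m>n$ and $2\lfloor m/2\rfloor$ if $m=n$. Then (i) $\deg h=\deg\rho$; (ii) $h(0)>0$; (iii) $h(z)\neq0$ for all $|z|<1$.
   Context: $T_k$ denotes the Chebyshev polynomial of the first kind, $T_k(\cos\theta)=\cos k\theta$. *)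

From mathcomp Require Import all_boot all_order all_algebra.
Set Implicit Arguments. Unset Strict Implicit. Unset Printing Implicit Defensive.
Import Order.TTheory GRing.Theory Num.Theory.
Local Open Scope ring_scope.

Fixpoint chebT (R : nzRingType) (k : nat) : {poly R} :=
  match k with
  | 0 => 1
  | 1 => 'X
  | S ((S k'') as k') => 'X *+ 2 * chebT R k' - chebT R k''
  end.

Definition chebrho (R : nzRingType) (m n : nat) : {poly R} :=
  (chebT R n \Po (1 - 'X *+ 2)) + (chebT R m \Po (1 + 'X *+ 2)).

From mathcomp Require Import all_boot all_order all_algebra.
From mathcomp Require Import ring zify.
Import Order.TTheory GRing.Theory Num.Theory.
Set Implicit Arguments. Unset Strict Implicit. Unset Printing Implicit Defensive.
Local Open Scope ring_scope.

(* Put a = (m + n)/2 and b = (m - n)/2, so that m = a + b and a = n + b.  If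
   s^2 = z^2 + 1, the two terms defining h are exchanged by s |-> -s, so
   h / sqrt 2 is the even part in s of (1 + s)^a (z + s)^b.  Multiplying out
   in pairs (p, q) standing for p + q s gives a polynomial all of whose
   intermediate coefficient pairs have positive leading coefficients; hence
   there is no cancellation and the degree can be read off, and the same
   computation with s = 2t gives the degree of T_m(1 - 2t) + T_m(1 + 2t).
   For |z| < 1 pick the branch with |w| < 1, where w = z / (1 + s) (if
   z = sinh u then w = tanh (u/2)).  Then h(z) is a nonzero multiple of
   (1 + w)^(2b) + (-1)^n w^(2a) (1 - w)^(2b), and the parallelogram law turns
   |z| < 1 into |w (1 - w)| < |1 + w|, so the first term dominates. *)

Section SqrtPairs.
Variable R : comNzRingType.

(* A pair [(p, q)] stands for [p + q * sqrt Y]; [mul_sqrt Y x] multiplies it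
   by [x + sqrt Y]. *)
Definition mul_sqrt (Y x : R) (v : R * R) : R * R :=
  (x * v.1 + v.2 * Y, v.1 + x * v.2).

Variables (S : comNzRingType) (f : {rmorphism R -> S}).

Definition eval_sqrt (s : S) (v : R * R) : S := f v.1 + f v.2 * s.

Lemma eval_sqrt_iter Y x s v k : s ^+ 2 = f Y ->
  eval_sqrt s (iter k (mul_sqrt Y x) v) = (f x + s) ^+ k * eval_sqrt s v.
Proof.
move=> sY; elim: k => [|k IHk]; first by rewrite mul1r.
by rewrite iterS exprS -mulrA -IHk /eval_sqrt /= !rmorphD !rmorphM -sY; ring.
Qed.

Lemma eval_sqrt1 s : eval_sqrt s (1, 0) = 1.
Proof. by rewrite /eval_sqrt /= rmorph1 rmorph0 mul0r addr0. Qed.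

Lemma eval_sqrtN s v : eval_sqrt s v + eval_sqrt (- s) v = f v.1 *+ 2.
Proof. by rewrite /eval_sqrt; ring. Qed.

End SqrtPairs.

Definition hpoly (R : comNzRingType) (a b : nat) : {poly R} :=
  (iter b (mul_sqrt ('X^2 + 1) 'X) (iter a (mul_sqrt ('X^2 + 1) 1) (1, 0))).1.

Lemma hpoly_horner (R : comNzRingType) a b (z s : R) : s ^+ 2 = z ^+ 2 + 1 ->
  (hpoly R a b).[z] *+ 2 =
  (s + 1) ^+ a * (s + z) ^+ b + (-1) ^+ (a + b) * (s - 1) ^+ a * (s - z) ^+ b.
Proof.
move=> sz; pose f := horner_eval z.
have sY : s ^+ 2 = f ('X^2 + 1) by rewrite /f horner_evalE !hornerE.
have sNY : (- s) ^+ 2 = f ('X^2 + 1) by rewrite sqrrN.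
rewrite -[_.[z]]/(f _) -(eval_sqrtN f s).
rewrite !(eval_sqrt_iter _ _ _ sY) !(eval_sqrt_iter _ _ _ sNY).
rewrite !eval_sqrt1 !mulr1 rmorph1 -[_ 'X]/(horner_eval z 'X) horner_evalE hornerX.
rewrite -(opprB s 1) -(opprB s z) (exprNn (s - z)) (exprNn (s - 1)) mulrACA -exprD addnC.
by rewrite [s + 1]addrC [s + z]addrC mulrC -mulrA [_ ^+ b * _]mulrC.
Qed.

Section PositiveLeadCoef.
Variable R : numDomainType.
Implicit Types p q : {poly R}.

Lemma lead_coefD_gt0 p q : 0 < lead_coef p -> 0 < lead_coef q ->
  size (p + q) = maxn (size p) (size q) /\ 0 < lead_coef (p + q).
Proof.
wlog le_qp : p q / (size q <= size p)%N => [hwlog lp lq|lp lq].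
  have /orP[le|le] := leq_total (size q) (size p); first exact: hwlog.
  by rewrite addrC maxnC; apply: hwlog.
rewrite (maxn_idPl le_qp); have [lt_qp|eq_qp] := ltnP (size q) (size p).
  by rewrite size_polyDl ?lead_coefDl.
have {eq_qp le_qp} eq_qp : size q = size p by apply/anti_leq/andP.
have top : 0 < (p + q)`_(size p).-1.
  by rewrite coefD -{2}eq_qp -!lead_coefE addr_gt0.
have sz : size (p + q) = size p.
  apply/anti_leq; rewrite -{1}(maxnn (size p)) -{2}eq_qp size_polyD /=.
  have p_gt0 : (0 < size p)%N by rewrite size_poly_gt0 -lead_coef_eq0 gt_eqF.
  rewrite -(prednK p_gt0) ltnNge; apply: contraTN top => /leq_sizeP -> //.
  by rewrite ltxx.
by rewrite lead_coefE sz.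
Qed.

Lemma lead_coefM_gt0 p q : 0 < lead_coef p -> 0 < lead_coef q ->
  size (p * q) = (size p + size q).-1 /\ 0 < lead_coef (p * q).
Proof.
move=> lp lq; rewrite size_mul -?lead_coef_eq0 ?gt_eqF // lead_coefM.
by split=> //; apply: mulr_gt0.
Qed.

End PositiveLeadCoef.

Section Chebyshev.
Variable R : nzRingType.

Lemma size_mul2X_leq (p : {poly R}) : (size ('X *+ 2 * p)%R <= (size p).+1)%N.
Proof.
rewrite mulrnAl -scaler_nat; apply: leq_trans (size_scale_leq _ _) _.
by apply: leq_trans (size_polyMleq _ _) _; rewrite size_polyX.
Qed.

Lemma chebTSS k : chebT R k.+2 = 'X *+ 2 * chebT R k.+1 - chebT R k.
Proof. by []. Qed.

Lemma size_chebT_leq k : (size (chebT R k) <= k.+1)%N.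
Proof.
suff /andP[] : (size (chebT R k) <= k.+1)%N && (size (chebT R k.+1) <= k.+2)%N by [].
elim: k => [|k /andP[IH0 IH1]]; first by rewrite size_polyX size_poly1.
rewrite IH1 chebTSS; apply: leq_trans (size_polyD _ _) _.
rewrite size_polyN geq_max (leq_trans (size_mul2X_leq _)) ?ltnS //=.
exact: leq_trans IH0 (leqW (leqnSn _)).
Qed.

Lemma size_chebT_sub_lead k : (size (chebT R k.+1 - 'X^(k.+1) *+ (2 ^ k)%N)%R <= k)%N.
Proof.
elim: k => [|k IHk]; first by rewrite expr1 subrr size_poly0.
have -> : chebT R k.+2 - 'X^(k.+2) *+ (2 ^ k.+1)%N =
    'X *+ 2 * (chebT R k.+1 - 'X^(k.+1) *+ (2 ^ k)%N) - chebT R k.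
  by rewrite chebTSS mulrBr mulrnAl mulrnAr mulrnAl -mulrnA -exprS -expnS addrAC.
apply: leq_trans (size_polyD _ _) _.
by rewrite size_polyN geq_max (leq_trans (size_mul2X_leq _)) ?size_chebT_leq.
Qed.

End Chebyshev.

Lemma size_chebT (R : numDomainType) k : size (chebT R k) = k.+1.
Proof.
case: k => [|k]; first by rewrite size_poly1.
have size_lead : size ('X^(k.+1) *+ (2 ^ k)%N : {poly R}) = k.+2.
  by rewrite -scaler_nat size_scale ?size_polyXn // pnatr_eq0 expn_eq0.
rewrite -(subrK ('X^(k.+1) *+ (2 ^ k)%N) (chebT R k.+1)) addrC size_polyDl size_lead //.
exact: leq_ltn_trans (size_chebT_sub_lead _ _) _.
Qed.

Section SqrtPairSize.
Variables (R : numDomainType) (Y : {poly R}).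
Hypotheses (size_Y : size Y = 3) (lead_Y : 0 < lead_coef Y).

Definition sized_pair (u w : nat) (v : {poly R} * {poly R}) :=
  [/\ size v.1 = u, size v.2 = w, 0 < lead_coef v.1 & 0 < lead_coef v.2].

Lemma mul_sqrt_sized x u w v : 0 < lead_coef x -> sized_pair u w v ->
  sized_pair (maxn (size x + u).-1 w.+2) (maxn u (size x + w).-1) (mul_sqrt Y x v).
Proof.
move=> lx [su sw lu lw].
have [sxu lxu] := lead_coefM_gt0 lx lu.
have [sxw lxw] := lead_coefM_gt0 lx lw.
have [swY lwY] := lead_coefM_gt0 lw lead_Y.
have [s1 l1] := lead_coefD_gt0 lxu lwY.
have [s2 l2] := lead_coefD_gt0 lu lxw.
by split; rewrite ?s1 ?s2 ?sxu ?swY ?sxw ?su ?sw ?size_Y ?addn3.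
Qed.

Lemma sized_iter1 k :
  sized_pair (k.+1 + odd k) (k.+1 - odd k) (iter k.+1 (mul_sqrt Y 1) (1, 0)).
Proof.
have l1 : 0 < lead_coef (1 : {poly R}) by rewrite lead_coef1 ltr01.
elim: k => [|k IHk].
  rewrite /= /mul_sqrt /= mul0r mulr0 !addr0 mulr1.
  by split; rewrite ?size_poly1 ?lead_coef1 ?ltr01.
have := mul_sqrt_sized l1 IHk; rewrite iterS size_poly1.
suff [-> ->] : (maxn (1 + (k.+1 + odd k)).-1 (k.+1 - odd k).+2 = k.+2 + odd k.+1
    /\ maxn (k.+1 + odd k) (1 + (k.+1 - odd k)).-1 = k.+2 - odd k.+1)%N by [].
by rewrite /=; case: (odd k); split; lia.
Qed.

Lemma sized_iterX u w v b : sized_pair u w v ->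
  sized_pair (maxn u w.+1 + b).+1 (maxn u w.+1 + b) (iter b.+1 (mul_sqrt Y 'X) v).
Proof.
have lX : 0 < lead_coef ('X : {poly R}) by rewrite lead_coefX ltr01.
move=> sv; have u_gt0 : (0 < u)%N.
  by case: sv => <- _ lu _; rewrite size_poly_gt0 -lead_coef_eq0 gt_eqF.
elim: b => [|b IHb].
  have := mul_sqrt_sized lX sv; rewrite size_polyX addn0.
  suff [-> ->] : (maxn (2 + u).-1 w.+2 = (maxn u w.+1).+1
    /\ maxn u (2 + w).-1 = maxn u w.+1)%N by [].
  by split; lia.
have := mul_sqrt_sized lX IHb; rewrite iterS size_polyX.
set c := (maxn u w.+1 + b)%N.
suff [-> ->] : (maxn (2 + c.+1).-1 c.+2 = (maxn u w.+1 + b.+1).+1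
    /\ maxn c.+1 (2 + c).-1 = maxn u w.+1 + b.+1)%N by [].
by split; lia.
Qed.

End SqrtPairSize.

Section DegreeComparison.
Variable R : numDomainType.

Lemma size_hpoly a b : (0 < a)%N -> (0 < b)%N -> size (hpoly R a b) = (a + b).+1.
Proof.
case: a => // k _; case: b => // j _.
have sY : size ('X^2 + 1 : {poly R}) = 3 by rewrite -polyC1 size_XnaddC.
have lY : 0 < lead_coef ('X^2 + 1 : {poly R}) by rewrite -polyC1 lead_coefXnaddC.
have [-> _ _ _] := sized_iterX sY lY j (sized_iter1 sY lY k).
by case: (odd k); lia.
Qed.

Lemma size_hpoly0 k : size (hpoly R k.+1 0) = (k.+1 + odd k)%N.
Proof.
have sY : size ('X^2 + 1 : {poly R}) = 3 by rewrite -polyC1 size_XnaddC.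
have lY : 0 < lead_coef ('X^2 + 1 : {poly R}) by rewrite -polyC1 lead_coefXnaddC.
by have [] := sized_iter1 sY lY k.
Qed.

Lemma size_1D2X :
  size (1 + 'X *+ 2 : {poly R}) = 2 /\ size (1 - 'X *+ 2 : {poly R}) = 2.
Proof.
have s2X : size ('X *+ 2 : {poly R}) = 2.
  by rewrite -scaler_nat size_scale ?size_polyX ?pnatr_eq0.
by split; rewrite addrC size_polyDl ?size_polyN s2X ?size_poly1.
Qed.

Lemma size_chebrho_lt m n : (n < m)%N -> size (chebrho R m n) = m.+1.
Proof.
have [s1 s2] := size_1D2X.
by move=> lt_nm; rewrite /chebrho addrC size_polyDl !size_comp_poly2 ?size_chebT.
Qed.

Lemma size_chebrho_eq k : size (chebrho R k.+1 k.+1) = (k.+1 + odd k)%N.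
Proof.
have [s1 s2] := size_1D2X; set t : {poly R} := 'X *+ 2 in s1 s2 *.
set r := chebT R k.+1 - 'X^(k.+1) *+ (2 ^ k)%N.
have compT q : chebT R k.+1 \Po q = q ^+ k.+1 *+ (2 ^ k)%N + (r \Po q).
  by rewrite -(subrK ('X^(k.+1) *+ (2 ^ k)%N) (chebT R k.+1)) -/r addrC comp_polyD
    -scaler_nat comp_polyZ comp_Xn_poly scaler_nat.
have lt : 0 < lead_coef t by rewrite /t -scaler_nat lead_coefZ lead_coefX mulr1 ltr0n.
have [sY lY] := lead_coefM_gt0 lt lt; rewrite -expr2 in sY lY.
have {}sY : size (t ^+ 2) = 3.
  by rewrite sY /t -scaler_nat size_scale ?size_polyX ?pnatr_eq0.
pose v := iter k.+1 (mul_sqrt (t ^+ 2) 1) (1, 0).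
have even_part : (1 - t) ^+ k.+1 + (1 + t) ^+ k.+1 = v.1 *+ 2.
  rewrite -[v.1]/(idfun v.1) -(eval_sqrtN idfun t) !eval_sqrt_iter ?sqrrN //.
  by rewrite !eval_sqrt1 !mulr1 addrC.
have [sv _ _ _] := sized_iter1 sY lY k.
have size_top : size (v.1 *+ (2 * 2 ^ k)) = (k.+1 + odd k)%N.
  by rewrite -scaler_nat size_scale ?sv // pnatr_eq0 muln_eq0 expn_eq0.
rewrite /chebrho !compT addrACA -mulrnDl even_part -mulrnA size_polyDl size_top //.
apply: leq_ltn_trans (size_polyD _ _) _; rewrite gtn_max -/t !size_comp_poly2 //.
by rewrite andbb ltnS (leq_trans (size_chebT_sub_lead R k)) ?leq_addr.
Qed.

End DegreeComparison.

(* [A + B = 2 + 2 r] is the parallelogram law for [A = |1 + w|^2],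
   [B = |1 - w|^2] and [r = |w|^2]. *)
Lemma parallelogram_bound (R : numDomainType) (r A B : R) : 0 <= r -> 0 <= B ->
  A + B = 2 + 2 * r -> r < 1 -> 4 * r < A * B -> r * B < A.
Proof.
move=> r0 B0 hAB; have {hAB}-> : A = 2 + 2 * r - B by rewrite -hAB addrK.
move=> r1 hAB.
have B_lt2 : B < 2.
  rewrite real_ltNge ?ger0_real //; apply/negP => B_ge2.
  have two_r : 2 * r <= B by apply: le_trans B_ge2; rewrite ler_piMr ?ler0n ?ltW.
  have : 0 <= (B - 2) * (B - 2 * r) by rewrite mulr_ge0 ?subr_ge0.
  rewrite (_ : _ * _ = 4 * r - (2 + 2 * r - B) * B); last by ring.
  by rewrite subr_ge0 => /(lt_le_trans hAB); rewrite ltxx.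
rewrite -subr_gt0 (_ : 2 + 2 * r - B - r * B = (1 + r) * (2 - B)); last by ring.
by rewrite mulr_gt0 ?subr_gt0 // (lt_le_trans ltr01) // lerDl.
Qed.

Section UnitDisk.
Variable C : numClosedFieldType.
Implicit Types w : C.

Lemma norm_disk_bound w : `|w| < 1 -> 2 * `|w| < `|1 - w| * `|1 + w| ->
  `|w| ^+ 2 * `|1 - w| ^+ 2 < `|1 + w| ^+ 2.
Proof.
move=> w1 hw; apply: parallelogram_bound; rewrite ?exprn_ge0 ?exprn_ilt1 //.
  by rewrite !normCK !rmorphD !rmorphN rmorph1; ring.
rewrite (_ : 4 = 2 ^+ 2); last by rewrite -natrX.
rewrite -!exprMn ltr_pXn2r ?nnegrE ?mulr_ge0 //.
by rewrite [X in _ < X]mulrC.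
Qed.

Lemma norm_neq1 w : 2 * `|w| < `|1 - w| * `|1 + w| -> `|w| != 1.
Proof.
apply: contraTneq => w1.
have le2 : `|1 - w ^+ 2| <= 2.
  by rewrite (le_trans (ler_normB _ _)) // normr1 normrX w1 expr1n.
rewrite -normrM (_ : (1 - w) * (1 + w) = 1 - w ^+ 2); last by ring.
by rewrite w1 mulr1; apply/negP => /lt_le_trans/(_ le2); rewrite ltxx.
Qed.

Lemma branch_sum_neq0 w n b : (0 < n)%N -> `|w| < 1 ->
  2 * `|w| < `|1 - w| * `|1 + w| ->
  ((1 + w) ^+ 2) ^+ b + (-1) ^+ n * (w ^+ 2) ^+ (n + b) * ((1 - w) ^+ 2) ^+ b != 0.
Proof.
move=> n_gt0 w1 hw; have key := norm_disk_bound w1 hw.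
have dom : `|(-1) ^+ n * (w ^+ 2) ^+ (n + b) * ((1 - w) ^+ 2) ^+ b|
    < `|((1 + w) ^+ 2) ^+ b|.
  rewrite !normrM !normrX normrN normr1 expr1n mul1r exprD -mulrA -exprMn.
  have pos : 0 < (`|1 + w| ^+ 2) ^+ b.
    by rewrite exprn_gt0 // (le_lt_trans _ key) // mulr_ge0 ?exprn_ge0.
  apply: le_lt_trans (_ : _ <= (`|w| ^+ 2) ^+ n * (`|1 + w| ^+ 2) ^+ b) _.
    by rewrite ler_wpM2l ?exprn_ge0 // lerXn2r ?nnegrE ?exprn_ge0 ?mulr_ge0 // ltW.
  by rewrite gtr_pMl // exprn_ilt1 ?exprn_ge0 ?exprn_ilt1 // -lt0n.
by rewrite addr_eq0; apply: contraTneq dom => ->; rewrite normrN ltxx.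
Qed.

End UnitDisk.

Section HalfAngle.
Variables (C : numClosedFieldType) (z s : C).
Hypotheses (hs : s ^+ 2 = z ^+ 2 + 1) (s1_neq0 : 1 + s != 0).
Local Notation w := (z / (1 + s)).

(* Identities in [z] and [s] are checked by [field] modulo [s^2 = z^2 + 1]. *)
Let eq_modulo_branch x y d : x - y = (s ^+ 2 - (z ^+ 2 + 1)) / d -> x = y.
Proof. by rewrite hs subrr mul0r => /eqP; rewrite subr_eq0 => /eqP. Qed.

Lemma half_angle_sub1 : s - 1 = w ^+ 2 * (1 + s).
Proof. by apply: (@eq_modulo_branch _ _ (1 + s)); field. Qed.

Lemma half_angle_addz : s + z = (1 + w) ^+ 2 * ((1 + s) / 2).
Proof. by apply: (@eq_modulo_branch _ _ (2 * (1 + s))); field. Qed.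

Lemma half_angle_subz : s - z = (1 - w) ^+ 2 * ((1 + s) / 2).
Proof. by apply: (@eq_modulo_branch _ _ (2 * (1 + s))); field. Qed.

Lemma half_angle_norm : `|z| < 1 -> 2 * `|w| < `|1 - w| * `|1 + w|.
Proof.
move=> z1; have one_sub : (1 - w) * (1 + w) = 2 / (1 + s).
  by apply: (@eq_modulo_branch _ _ ((1 + s) ^+ 2)); field.
have two_w : 2 * w = z * (2 / (1 + s)) by rewrite mulrCA.
have -> : 2 * `|w| = `|2 * w| by rewrite [RHS]normrM normr_nat.
rewrite two_w -normrM one_sub normrM gtr_pMl //.
by rewrite normr_gt0 mulf_neq0 ?invr_eq0 ?pnatr_eq0.
Qed.

Lemma branch_factor a b n :
  (s + 1) ^+ a * (s + z) ^+ b + (-1) ^+ n * (s - 1) ^+ a * (s - z) ^+ b =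
  (1 + s) ^+ a * ((1 + s) / 2) ^+ b *
  (((1 + w) ^+ 2) ^+ b + (-1) ^+ n * (w ^+ 2) ^+ a * ((1 - w) ^+ 2) ^+ b).
Proof.
rewrite (addrC s 1) half_angle_sub1 half_angle_addz half_angle_subz !exprMn.
by rewrite !mulrDr !mulrA; congr (_ + _); rewrite mulrAC; ring.
Qed.

Lemma branch_neq0 a b n : a = (n + b)%N -> (0 < n)%N -> `|z| < 1 -> `|w| < 1 ->
  (s + 1) ^+ a * (s + z) ^+ b + (-1) ^+ n * (s - 1) ^+ a * (s - z) ^+ b != 0.
Proof.
move=> -> n_gt0 z1 w1; rewrite branch_factor.
rewrite !mulf_neq0 ?expf_neq0 ?mulf_neq0 ?invr_eq0 ?pnatr_eq0 //.
exact: branch_sum_neq0 n_gt0 w1 (half_angle_norm z1).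
Qed.

End HalfAngle.

Lemma exists_branch (C : numClosedFieldType) (z : C) : z != 0 -> `|z| < 1 ->
  exists s : C, [/\ s ^+ 2 = z ^+ 2 + 1, 1 + s != 0 & `|z / (1 + s)| < 1].
Proof.
move=> z0 z1; have [t ht] : exists t : C, t ^+ 2 = z ^+ 2 + 1.
  by exists (sqrtC (z ^+ 2 + 1)); rewrite sqrtCK.
have hNt : (- t) ^+ 2 = z ^+ 2 + 1 by rewrite sqrrN.
have prod : (1 + t) * (1 + - t) = - z ^+ 2.
  rewrite (_ : _ * _ = 1 - t ^+ 2); last by ring.
  by rewrite ht; ring.
have /andP[t1 tN1] : (1 + t != 0) && (1 + - t != 0).
  by rewrite -negb_or -mulf_eq0 prod oppr_eq0 expf_neq0.
have inv : `|z / (1 + t)| * `|z / (1 + - t)| = 1.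
  by rewrite -normrM mulf_div -expr2 prod invrN mulrN divff ?expf_neq0 // normrN normr1.
(* The two branches give values of [w] with product [-1], none of modulus 1. *)
have w1_neq1 := norm_neq1 (half_angle_norm ht t1 z1).
have [lt1|gt1|eq1] := real_ltgtP (normr_real (z / (1 + t))) (real1 C).
- by exists t.
- exists (- t); split=> //.
  have w_neq0 : `|z / (1 + t)| != 0 by rewrite gt_eqF // (lt_trans ltr01).
  rewrite (_ : `|_| = `|z / (1 + t)|^-1); last by apply: (mulfI w_neq0); rewrite inv divff.
  by rewrite invf_lt1 // (lt_trans ltr01).
- by rewrite eq1 eqxx in w1_neq1.
Qed.

Lemma size_hpoly_chebrho (R : numDomainType) m n :
  (0 < n)%N -> (n <= m)%N -> odd m = odd n ->
  size (hpoly R ((m + n)./2) ((m - n)./2)) = size (chebrho R m n).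
Proof.
move=> n_gt0 le_nm hpar; have [lt_nm|ge_nm] := ltnP n m.
  by rewrite size_chebrho_lt // size_hpoly; lia.
have {le_nm ge_nm} -> : m = n by apply/anti_leq/andP.
case: n n_gt0 {hpar} => // k _.
by rewrite subnn addnn doubleK size_hpoly0 size_chebrho_eq.
Qed.

Theorem mainTheorem2 (C : numClosedFieldType) (m n : nat)
    (hn : (0 < n)%N) (hnm : (n <= m)%N) (hpar : odd m = odd n) :
  exists h : {poly C},
    (forall z s : C, s ^+ 2 = z ^+ 2 + 1 ->
       h.[z] = (sqrtC 2)^-1 *
         ((s + 1) ^+ ((m + n)./2) * (s + z) ^+ ((m - n)./2)
          + (-1) ^+ n * (s - 1) ^+ ((m + n)./2) * (s - z) ^+ ((m - n)./2)))
    /\ (size h).-1 = (size (chebrho C m n)).-1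
    /\ 0 < h.[0]
    /\ (forall z : C, `|z| < 1 -> h.[z] != 0).
Proof.
have ha : (m + n)./2 = (n + (m - n)./2)%N by lia.
have sgn : (-1) ^+ ((m + n)./2 + (m - n)./2)%N = (-1) ^+ n :> C.
  by rewrite -signr_odd (_ : (_ + _)%N = m) ?hpar ?signr_odd //; lia.
set a := (m + n)./2 in ha sgn *; set b := (m - n)./2 in ha sgn *.
have hE z s : s ^+ 2 = z ^+ 2 + 1 -> (hpoly C a b *+ 2).[z] =
    (s + 1) ^+ a * (s + z) ^+ b + (-1) ^+ n * (s - 1) ^+ a * (s - z) ^+ b.
  by move=> hs; rewrite hornerMn (hpoly_horner _ _ hs) sgn.
have c_gt0 : 0 < (sqrtC 2)^-1 :> C by rewrite invr_gt0 sqrtC_gt0 ltr0n.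
have h0_gt0 : 0 < (hpoly C a b *+ 2).[0].
  rewrite (hE 0 1) ?expr0n ?expr1n ?add0r // addr0 subr0 subrr !expr1n expr0n ha.
  by rewrite addn_eq0 (gtn_eqF hn) mulr0 mul0r addr0 mulr1 exprn_gt0 ?addr_gt0 ?ltr01.
exists ((sqrtC 2)^-1 *: (hpoly C a b *+ 2)).
split; first by move=> z s /hE <-; rewrite hornerZ.
split.
  by rewrite size_scale ?gt_eqF // -scaler_nat size_scale ?pnatr_eq0 // size_hpoly_chebrho.
split; first by rewrite hornerZ mulr_gt0.
move=> z z1; rewrite hornerZ; apply: mulf_neq0; first by rewrite gt_eqF.
have [->|z0] := eqVneq z 0; first by rewrite gt_eqF.
have [s [hs s1 w1]] := exists_branch z0 z1.
by rewrite (hE z s hs) branch_neq0.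
Qed.
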